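(* Every countable ring $R$ admits a proper norm. More precisely, let $w\colon R\to\mathbb N$ be a finite-to-one function with $w(0)=0$, $w(r)\ge2$ for $r\ne0$, and $w(r)=w(-r)$; extend $w$ to all terms $t$ in the language $\{+,\cdot\}\cup R$ (constants from $R$) by $w(t_1+t_2)=w(t_1)+w(t_2)$ and $w(t_1\cdot t_2)=w(t_1)w(t_2)$, and let $|r|$ be the minimum of $w(t)$ over all terms $t$ whose value in $R$ is $r$. Then $|\cdot|$ is a proper norm on $R$.
   Context: All rings are unital. A norm on a ring $R$ is a function $|\cdot|\colon R\to[0,\infty)$ such that $(a,b)\mapsto|a-b|$ is a metric on $R$ and $|rs|\le|r||s|$ for all $r,s\in R$; it is proper if every closed ball of this metric is compact. *)

From HB Require Import structures.
From mathcomp Require Import all_boot all_order all_algebra.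
From mathcomp Require Import boolp Rstruct.
Set Implicit Arguments. Unset Strict Implicit. Unset Printing Implicit Defensive.
Import Order.TTheory GRing.Theory Num.Theory.
Local Open Scope ring_scope.

Notation Real := Rdefinitions.R.

Inductive term (R : Type) : Type :=
| TConst : R -> term R
| TAdd : term R -> term R -> term R
| TMul : term R -> term R -> term R.

Fixpoint teval (R : pzRingType) (t : term R) : R :=
  match t with
  | TConst r => r
  | TAdd t1 t2 => teval t1 + teval t2
  | TMul t1 t2 => teval t1 * teval t2
  end.

Fixpoint tweight (R : Type) (w : R -> nat) (t : term R) : nat :=
  match t with
  | TConst r => w r
  | TAdd t1 t2 => tweight w t1 + tweight w t2
  | TMul t1 t2 => tweight w t1 * tweight w t2
  end%N.

Lemma term_norm_ex (R : pzRingType) (w : R -> nat) (r : R) :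
  exists n, `[< exists t : term R, teval t = r /\ tweight w t = n >].
Proof. exists (w r); apply/asboolP; by exists (TConst r). Qed.

Definition term_norm (R : pzRingType) (w : R -> nat) (r : R) : nat :=
  ex_minn (term_norm_ex w r).

Definition countable_type (T : Type) : Prop :=
  exists f : T -> nat, forall x y, f x = f y -> x = y.

Definition finite_to_one (T : Type) (w : T -> nat) : Prop :=
  forall n : nat, exists s : list T, forall x, w x = n -> List.In x s.

Definition is_metric (T : Type) (d : T -> T -> Real) : Prop :=
  [/\ forall x y, 0 <= d x y,
      forall x y, d x y = 0 <-> x = y,
      forall x y, d x y = d y x
    & forall x y z, d x z <= d x y + d y z].

Definition metric_open (T : Type) (d : T -> T -> Real) (U : T -> Prop) : Prop :=
  forall x, U x -> exists2 e : Real, 0 < e & forall y, d x y < e -> U y.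

Definition metric_compact (T : Type) (d : T -> T -> Real) (K : T -> Prop) : Prop :=
  forall (I : Type) (U : I -> T -> Prop),
    (forall i, metric_open d (U i)) ->
    (forall x, K x -> exists i, U i x) ->
    exists s : list I, forall x, K x -> exists i, List.In i s /\ U i x.

Definition is_ring_norm (R : pzRingType) (N : R -> Real) : Prop :=
  [/\ forall r, 0 <= N r,
      is_metric (fun a b => N (a - b))
    & forall r s, N (r * s) <= N r * N s].

Definition is_proper_ring_norm (R : pzRingType) (N : R -> Real) : Prop :=
  is_ring_norm N /\
  forall (a : R) (e : Real),
    metric_compact (fun x y => N (x - y)) (fun b => N (a - b) <= e).

From Stdlib Require Import List.
From HB Require Import structures.
From mathcomp Require Import all_boot all_order all_algebra.
From mathcomp Require Import boolp Rstruct zify.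
Import Order.TTheory GRing.Theory Num.Theory.
Local Open Scope ring_scope.

(* Concatenating or multiplying optimal terms gives |x + y| <= |x| + |y| and
   |xy| <= |x||y|; negating the constants of a term (w is even) shows
   |-x| = |x|; and since nonzero constants weigh at least 2, a term of weight
   0 evaluates to 0, so |x| = 0 iff x = 0.  These facts make |.| a ring norm.
   For properness, the same weight bounds show that a term of weight <= n+1
   is either a constant of weight n+1 or has a value obtained from values of
   terms of weight <= n by one sum or product; as w is finite-to-one, by
   induction only finitely many elements have norm <= n.  Hence every closed
   ball is a finite set, and finite sets are compact in any metric. *)

(* A set contained in a finite list is compact for any distance function:
   pick one member of the cover for each point of the list. *)
Lemma finite_metric_compact (T : eqType) (d : T -> T -> Real)
    (K : T -> Prop) (s : seq T) :
  (forall x, K x -> x \in s) -> metric_compact d K.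
Proof.
move=> Ks I U _ cover.
suff [l Hl] : exists l : list I,
    forall x, K x -> x \in s -> exists i, In i l /\ U i x.
  by exists l => x Kx; apply: Hl => //; apply: Ks.
elim: s {Ks} => [|v s [l Hl]]; first by exists nil.
have [Kv|nKv] := pselect (K v).
- have [i Ui] := cover v Kv.
  exists (i :: l) => x Kx; rewrite in_cons => /predU1P [->|xs].
    by exists i; split => //; left.
  by have [j [jl Uj]] := Hl x Kx xs; exists j; split => //; right.
- exists l => x Kx; rewrite in_cons => /predU1P [xv|]; last exact: Hl.
  by move: Kx; rewrite xv.
Qed.

Lemma In_mem (T : eqType) (x : T) (s : seq T) : In x s -> x \in s.
Proof. by elim: s => //= y s IH [->|/IH xs]; rewrite in_cons ?eqxx ?xs ?orbT. Qed.

Section TermNorm.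
Variables (R : pzRingType) (w : R -> nat).
Local Notation tnorm := (term_norm w).

Lemma term_norm_attained (r : R) :
  exists t : term R, teval t = r /\ tweight w t = tnorm r.
Proof.
by rewrite /term_norm; case: ex_minnP => m /asboolP [t [tr tm]] _; exists t.
Qed.

Lemma term_norm_le_weight (t : term R) : (tnorm (teval t) <= tweight w t)%N.
Proof.
by rewrite /term_norm; case: ex_minnP => m _; apply; apply/asboolP; exists t.
Qed.

Lemma term_norm_add (x y : R) : (tnorm (x + y) <= tnorm x + tnorm y)%N.
Proof.
have [[tx [<- <-]] [ty [<- <-]]] := (term_norm_attained x, term_norm_attained y).
exact: (term_norm_le_weight (TAdd tx ty)).
Qed.

Lemma term_norm_mul (x y : R) : (tnorm (x * y) <= tnorm x * tnorm y)%N.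
Proof.
have [[tx [<- <-]] [ty [<- <-]]] := (term_norm_attained x, term_norm_attained y).
exact: (term_norm_le_weight (TMul tx ty)).
Qed.

Lemma term_norm0 : w 0 = 0%N -> tnorm 0 = 0%N.
Proof.
move=> w0; apply/eqP; rewrite -leqn0.
by have := term_norm_le_weight (TConst 0); rewrite /= w0.
Qed.

Section Symmetric.
Hypothesis wN : forall r : R, w r = w (- r).

(* Negating every constant in the left factors of products negates the
   value of a term without changing its weight. *)
Fixpoint term_opp (t : term R) : term R :=
  match t with
  | TConst r => TConst (- r)
  | TAdd a b => TAdd (term_opp a) (term_opp b)
  | TMul a b => TMul (term_opp a) b
  end.

Lemma teval_opp (t : term R) : teval (term_opp t) = - teval t.
Proof. by elim: t => [r|a IHa b IHb|a IHa b _] //=; rewrite IHa ?IHb (opprD, mulNr). Qed.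

Lemma tweight_opp (t : term R) : tweight w (term_opp t) = tweight w t.
Proof. by elim: t => [r|a IHa b IHb|a IHa b _] /=; rewrite -?wN ?IHa ?IHb. Qed.

Lemma term_normN (r : R) : tnorm (- r) = tnorm r.
Proof.
have le_opp (x : R) : (tnorm (- x) <= tnorm x)%N.
  have [t [<- <-]] := term_norm_attained x.
  by rewrite -teval_opp -tweight_opp term_norm_le_weight.
by apply/eqP; rewrite eqn_leq le_opp -{1}(opprK r) le_opp.
Qed.

End Symmetric.

Section Positive.
Hypothesis w2 : forall r : R, r != 0 -> (2 <= w r)%N.

Lemma weight_const_lt2 (r : R) : (w r < 2)%N -> r = 0.
Proof. by case: (eqVneq r 0) => // /w2; rewrite leqNgt => /negbTE ->. Qed.

Lemma teval_weight0 (t : term R) : tweight w t = 0%N -> teval t = 0.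
Proof.
elim: t => [r|a IHa b IHb|a IHa b IHb] /=.
- by move=> r0; apply: weight_const_lt2; rewrite r0.
- by move/eqP; rewrite addn_eq0 => /andP [/eqP/IHa -> /eqP/IHb ->]; rewrite addr0.
- by move/eqP; rewrite muln_eq0 => /orP [/eqP/IHa ->|/eqP/IHb ->]; rewrite (mul0r, mulr0).
Qed.

Lemma term_norm_eq0 (r : R) : tnorm r = 0%N -> r = 0.
Proof. by have [t [<- <-]] := term_norm_attained r; apply: teval_weight0. Qed.

Hypothesis w0 : w 0 = 0%N.

(* No term weighs exactly 1; so in a product of two terms of positive weight
   each factor weighs at most half of the product. *)
Lemma tweight_neq1 (t : term R) : tweight w t <> 1%N.
Proof.
elim: t => [r|a IHa b IHb|a IHa b IHb] /=.
- move=> w1; have r0 : r = 0 by apply: weight_const_lt2; rewrite w1.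
  by move: w1; rewrite r0 w0.
- by move: IHa IHb; case: (tweight w a) => [|[|?]]; case: (tweight w b) => [|[|?]];
    move=> *; lia.
- by move: IHa IHb; case: (tweight w a) => [|[|?]]; case: (tweight w b) => [|[|?]];
    move=> *; nia.
Qed.

(* Induction step for finiteness: if s lists the values of all terms of
   weight <= n and c the constants of weight n.+1, then the values of terms
   of weight <= n.+1 lie in s, in c, or are sums or products of two elements
   of s (a summand of weight 0 contributes nothing). *)
Definition weight_step (s c : seq R) : seq R :=
  s ++ c ++ [seq a + b | a <- s, b <- s] ++ [seq a * b | a <- s, b <- s].

Lemma weight_step_spec (n : nat) (s c : seq R) :
    (forall t, (tweight w t <= n)%N -> teval t \in s) ->
    (forall r, w r = n.+1 -> r \in c) ->
  forall t, (tweight w t <= n.+1)%N -> teval t \in weight_step s c.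
Proof.
move=> Hs Hc; rewrite /weight_step.
have prod_in (f : R -> R -> R) (a b : term R) :
    (tweight w a <= n)%N -> (tweight w b <= n)%N ->
  f (teval a) (teval b) \in [seq f x y | x <- s, y <- s].
  by move=> an bn; rewrite allpairs_f ?Hs.
elim => [r|a IHa b IHb|a _ b _] /= tn.
- have [rn|rn] := leqP (w r) n; first by rewrite mem_cat (Hs (TConst r)).
  by rewrite !mem_cat Hc ?orbT //; apply/eqP; rewrite eqn_leq tn rn.
- have [a0|a0] := eqVneq (tweight w a) 0%N.
    by rewrite teval_weight0 // add0r IHb //; rewrite a0 in tn.
  have [b0|b0] := eqVneq (tweight w b) 0%N.
    by rewrite [teval b]teval_weight0 // addr0 IHa //; rewrite b0 addn0 in tn.
  by rewrite !mem_cat prod_in ?orbT //; lia.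
- have [ab0|ab0] := eqVneq (tweight w a * tweight w b)%N 0%N.
    by rewrite mem_cat (Hs (TMul a b)) //= ab0.
  have := tweight_neq1 a; have := tweight_neq1 b => b1 a1.
  by rewrite !mem_cat prod_in ?orbT //; nia.
Qed.

Lemma term_norm_bounded_finite (n : nat) : finite_to_one w ->
  exists s : seq R, forall r, (tnorm r <= n)%N -> r \in s.
Proof.
move=> wfin; suff [s Hs] : exists s : seq R,
    forall t, (tweight w t <= n)%N -> teval t \in s.
  by exists s => r; have [t [<- <-]] := term_norm_attained r; apply: Hs.
elim: n => [|n [s Hs]].
  by exists [:: 0] => t /[!leqn0] /eqP /teval_weight0 ->; rewrite mem_seq1.
have [c Hc] := wfin n.+1.
exists (weight_step s c); apply: weight_step_spec => // r /Hc; exact: In_mem.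
Qed.

End Positive.

Lemma term_norm_is_ring_norm :
    w 0 = 0%N -> (forall r : R, r != 0 -> (2 <= w r)%N) ->
    (forall r : R, w r = w (- r)) ->
  is_ring_norm (fun r : R => ((tnorm r)%:R : Real)).
Proof.
move=> w0 w2 wN; split=> [r|| r s]; rewrite ?ler0n //; last first.
  by rewrite -natrM ler_nat term_norm_mul.
split=> [x y|x y|x y|x y z]; rewrite ?ler0n //.
- split=> [/eqP|->]; last by rewrite subrr term_norm0.
  by rewrite pnatr_eq0 => /eqP /(term_norm_eq0 w2) /subr0_eq.
- by rewrite -opprB term_normN.
- by rewrite -natrD ler_nat -(subrKA y) term_norm_add.
Qed.

Lemma term_norm_balls_compact :
    finite_to_one w -> w 0 = 0%N -> (forall r : R, r != 0 -> (2 <= w r)%N) ->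
  forall (a : R) (e : Real),
    metric_compact (fun x y => ((tnorm (x - y))%:R : Real))
                   (fun b => ((tnorm (a - b))%:R : Real) <= e).
Proof.
move=> wfin w0 w2 a e.
have e_lt_bound : `|e| < (Num.bound `|e|)%:R by apply: archi_boundP.
have [s Hs] := term_norm_bounded_finite w2 w0 (Num.bound `|e|) wfin.
apply: (@finite_metric_compact _ _ _ [seq a - r | r <- s]) => b ball.
have -> : b = a - (a - b) by rewrite opprB addrC subrK.
apply: map_f; apply: Hs; apply: ltnW; rewrite -(ltr_nat Real).
by apply: (le_lt_trans ball); apply: le_lt_trans e_lt_bound; apply: ler_norm.
Qed.

End TermNorm.

Theorem mainTheorem11 (R : pzRingType) (w : R -> nat) :
  countable_type R ->
  finite_to_one w ->
  w 0 = 0%N ->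
  (forall r : R, r != 0 -> (2 <= w r)%N) ->
  (forall r : R, w r = w (- r)) ->
  is_proper_ring_norm (fun r : R => ((term_norm w r)%:R : Real)).
Proof.
move=> _ wfin w0 w2 wN; split.
- exact: term_norm_is_ring_norm.
- exact: term_norm_balls_compact.
Qed.
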